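(* Assume Case 4 holds with index $k$. Let $(A,B)=(n_{k-1},m_{k-1})$ and for $n\ge1$ put $(A_n,B_n)=(\gamma_n-(\gamma-A)d^{n-1},\ Bd^{n-1})$ and $(A_n^*,B_n^* )=\big((\delta^{n-1}+\delta^{n-2}B+\cdots+B^{n-1})A,\ B^n\big)$. (i) If $\delta<T_{k-1}$, then for every $n\ge1$, $(A_n,B_n)$ is the vertex of $N(Q^n)$ immediately preceding $(\gamma_n,d^n)$ (in order of increasing $x$-coordinate), the segment joining them has slope $-l_1^{-1}$, and $\delta^n$ is strictly smaller than the $y$-intercept of the line through these two points. (ii) If $\delta=T_{k-1}$, then for every $n\ge1$, $(A_n^*,B_n^* )$ is the vertex of $N(Q^n)$ immediately preceding $(\gamma_n,d^n)$, the segment joining them has slope $-l_1^{-1}$, and $\delta^n$ equals the $y$-intercept of the line through these two points.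
   Context: Let $f(z,w)=(p(z),q(z,w))$ be a holomorphic skew product germ at the origin of $\mathbb{C}^2$ with $f(0,0)=(0,0)$, where $p(z)=a_\delta z^\delta+O(z^{\delta+1})$ with $a_\delta\neq0$ and integer $\delta\ge1$, and $q(z,w)=\sum_{i+j\ge1}b_{ij}z^iw^j$ is not identically zero. For $n\ge1$ write $f^n=(p^n,Q^n)$. The Newton polygon $N(g)$ of a nonzero germ $g=\sum g_{ij}z^iw^j$ is the convex hull of $\bigcup_{g_{ij}\neq0}\{(x,y):x\ge i,\ y\ge j\}$. Let $(n_1,m_1),\dots,(n_s,m_s)$ be the vertices of $N(q)$ with $n_1<\cdots<n_s$, $m_1>\cdots>m_s$; for $1\le k\le s-1$ let $T_k$ be the $y$-intercept of the line through $(n_k,m_k)$ and $(n_{k+1},m_{k+1})$. Case 4 means: $s>2$ and $T_k\le\delta\le T_{k-1}$ for some $2\le k\le s-1$; for this $k$ set $(\gamma,d)=(n_k,m_k)$, $l_1=\frac{n_k-n_{k-1}}{m_{k-1}-m_k}$ and $l_2$ defined by $l_1+l_2=\frac{n_{k+1}-n_k}{m_k-m_{k+1}}$. Define $\gamma_n=\gamma(\delta^{n-1}+\delta^{n-2}d+\cdots+d^{n-1})$. *)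

From HB Require Import structures.
From mathcomp Require Import all_boot all_order all_algebra.
From mathcomp Require Import reals.
From mathcomp.real_closed Require Import complex.
Set Implicit Arguments. Unset Strict Implicit. Unset Printing Implicit Defensive.
Import Order.TTheory GRing.Theory Num.Theory.
Local Open Scope ring_scope.
Local Open Scope complex_scope.

(** Formal power series in two variables z, w over C = R[i]:
    a series g is represented by its coefficient function (i, j) |-> g_ij,
    the coefficient of z^i w^j. *)
Definition ser (R : realType) := nat -> nat -> R[i].

Section Series.
Variable R : realType.
Local Notation ser := (ser R).

Definition ser_one : ser := fun a b => ((a == 0%N) && (b == 0%N))%:R.
Definition ser_z : ser := fun a b => ((a == 1%N) && (b == 0%N))%:R.
Definition ser_w : ser := fun a b => ((a == 0%N) && (b == 1%N))%:R.

Definition ser_mul (F G : ser) : ser := fun a b =>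
  \sum_(i < a.+1) \sum_(j < b.+1) F i j * G (a - i)%N (b - j)%N.

Definition ser_pow (F : ser) (n : nat) : ser := iter n (ser_mul F) ser_one.

(** Formal substitution g(P, Q) = sum_{i,j} g_ij P^i Q^j, for series P, Q
    without constant term (then only the terms with i + j <= a + b
    contribute to the coefficient of z^a w^b, so the sum is finite). *)
Definition ser_comp (g P Q : ser) : ser := fun a b =>
  \sum_(i < (a + b).+1) \sum_(j < (a + b).+1)
     g i j * ser_mul (ser_pow P i) (ser_pow Q j) a b.

Definition ser_of1 (pc : nat -> R[i]) : ser := fun a b => if b == 0%N then pc a else 0.

(** Iterates of the skew product f = (p, q): f^0 = id, f^(n+1) = f o f^n,
    so that f^n = (p^n, Q^n). *)
Definition skew_iter (pc : nat -> R[i]) (q : ser) (n : nat) : ser * ser :=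
  iter n (fun PQ => (ser_comp (ser_of1 pc) PQ.1 PQ.2, ser_comp q PQ.1 PQ.2))
       (ser_z, ser_w).

Definition Qn (pc : nat -> R[i]) (q : ser) (n : nat) : ser := (skew_iter pc q n).2.

(** Convergence (holomorphic germ): Cauchy-type coefficient bounds. *)
Definition convergent1 (pc : nat -> R[i]) : Prop :=
  exists M : R, forall i, `|pc i| <= (M ^+ i.+1)%:C.
Definition convergent2 (g : ser) : Prop :=
  exists M : R, forall i j, `|g i j| <= (M ^+ (i + j).+1)%:C.

Definition quadrants (g : ser) (x : R * R) : Prop :=
  exists i j, g i j != 0 /\ (i%:R <= x.1) /\ (j%:R <= x.2).

Definition convex_hull (P : R * R -> Prop) (x : R * R) : Prop :=
  exists (n : nat) (lam : 'I_n -> R) (pt : 'I_n -> R * R),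
    (forall t, 0 <= lam t) /\ \sum_t lam t = 1 /\ (forall t, P (pt t)) /\
    x = (\sum_t lam t * (pt t).1, \sum_t lam t * (pt t).2).

Definition newton (g : ser) : R * R -> Prop := convex_hull (quadrants g).

Definition is_vertex (N : R * R -> Prop) (v : R * R) : Prop :=
  N v /\ forall (x y : R * R) (t : R), N x -> N y -> 0 < t < 1 ->
    v = (t * x.1 + (1 - t) * y.1, t * x.2 + (1 - t) * y.2) -> x = y.

Definition prec_vertex (N : R * R -> Prop) (u v : R * R) : Prop :=
  is_vertex N u /\ is_vertex N v /\ u.1 < v.1 /\
  forall w, is_vertex N w -> ~ (u.1 < w.1 /\ w.1 < v.1).

Definition slope (P1 P2 : R * R) : R := (P2.2 - P1.2) / (P2.1 - P1.1).
Definition yintercept (P1 P2 : R * R) : R := P1.2 - slope P1 P2 * P1.1.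

Definition gsum (a b : R) (n : nat) : R :=
  \sum_(i < n) a ^+ (n.-1 - i) * b ^+ i.

End Series.

From HB Require Import structures.
From mathcomp Require Import all_boot all_order all_algebra.
From mathcomp Require Import reals.
From mathcomp.real_closed Require Import complex.
From mathcomp Require Import ring lra zify.
Import Order.TTheory GRing.Theory Num.Theory.
Local Open Scope ring_scope.
Local Open Scope complex_scope.
Set Implicit Arguments. Unset Strict Implicit. Unset Printing Implicit Defensive.

(* For a weight l > 0 put wt_l(a, b) = a + l b.  A "face" of a series F in
   direction l is the segment of N(F) on which wt_l is minimal; we record it
   by its two endpoints [face F l pa pb va vb].  The proof has four layers:
   1. Algebra of faces: faces in a common direction add under products, and
      the face of a composition g(P, Q) -- with P having the single point
      (pa, 0) as face and the face of Q on the line wt_l = mu pa -- is the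
      image of the mu-face of g (comp_face).  By induction p^n has the face
      (delta^n, 0) in every direction.
   2. Geometry of N(g): a face with distinct endpoints consists of two
      consecutive vertices, with slope -1/l and y-intercept wt_l / l
      (face_summary); conversely consecutive listed vertices of N(q) span a
      face of q (face_of_vertices).
   3. Faces of Q^n = q(p^(n-1), Q^(n-1)) in direction l1, by induction on n:
      in case (i) the intermediate weight mu_n = wt_l1(gamma_n, d^n)/delta^n
      lies strictly between l1 and l2, so only the vertex (gamma, d) of q
      contributes (Qn_face_generic); in case (ii) mu_n = l1 and the whole
      edge [(A, B), (gamma, d)] of q is transported (Qn_face_critical).
   4. The proposition follows by computing coordinates, slopes and
      y-intercepts of these faces. *)

Lemma sum2_neq0 (V : nmodType) n m (f : nat -> nat -> V) :
  \sum_(i < n) \sum_(j < m) f i j != 0 ->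
  exists i j, [/\ (i < n)%N, (j < m)%N & f i j != 0].
Proof.
move=> Hsum.
have [/existsP[i /existsP[j Hij]]|/existsPn Hall] :=
  boolP [exists i : 'I_n, exists j : 'I_m, f i j != 0].
  by exists i, j; rewrite !ltn_ord.
move: Hsum; rewrite big1 ?eqxx // => i _; rewrite big1 // => j _.
by move/existsPn: (Hall i) => /(_ j) /negPn /eqP.
Qed.

Lemma sum2_single (V : nmodType) n m (f : nat -> nat -> V) i0 j0 :
  (i0 < n)%N -> (j0 < m)%N ->
  (forall i j, (i < n)%N -> (j < m)%N -> f i j != 0 -> i = i0 /\ j = j0) ->
  \sum_(i < n) \sum_(j < m) f i j = f i0 j0.
Proof.
move=> Hi Hj H.
rewrite (bigD1 (Ordinal Hi)) //= [X in _ + X]big1 ?addr0; last first.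
  move=> i Hne; apply: big1 => j _; apply/eqP/negPn/negP => Hnz.
  have [Ei _] := H i j (ltn_ord i) (ltn_ord j) Hnz.
  by move: Hne; rewrite (_ : i = Ordinal Hi) ?eqxx //; apply: val_inj.
rewrite (bigD1 (Ordinal Hj)) //= [X in _ + X]big1 ?addr0 // => j Hne.
apply/eqP/negPn/negP => Hnz; have [_ Ej] := H i0 j Hi (ltn_ord j) Hnz.
by move: Hne; rewrite (_ : j = Ordinal Hj) ?eqxx //; apply: val_inj.
Qed.

Section Faces.
Variable R : realType.
Implicit Types (l mu : R) (F G g P Q : ser R).

Definition wt l (a b : nat) : R := a%:R + l * b%:R.

(* Geometrically, the face
   of N(F) cut out by the direction (1, l) is the segment [(pa,pb), (va,vb)]. *)
Definition face F l (pa pb va vb : nat) : Prop :=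
  [/\ F pa pb != 0, F va vb != 0, wt l pa pb = wt l va vb,
     (forall a b, F a b != 0 -> wt l pa pb <= wt l a b) &
     (forall a b, F a b != 0 -> wt l a b = wt l pa pb -> (pa <= a <= va)%N)].

Lemma wtD l a1 b1 a2 b2 : wt l (a1 + a2) (b1 + b2) = wt l a1 b1 + wt l a2 b2.
Proof. rewrite /wt !natrD; ring. Qed.

Lemma wtB l a b i j : (i <= a)%N -> (j <= b)%N ->
  wt l (a - i) (b - j) = wt l a b - wt l i j.
Proof. move=> Hi Hj; rewrite /wt !natrB //; ring. Qed.

Lemma wt_inj l i j j' : 0 < l -> wt l i j = wt l i j' -> j = j'.
Proof.
move=> l0; rewrite /wt => /addrI /(mulfI (lt0r_neq0 l0)) /eqP.
by rewrite eqr_nat => /eqP.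
Qed.

Lemma face_ext F G l pa pb va vb : F =2 G ->
  face F l pa pb va vb -> face G l pa pb va vb.
Proof.
move=> E [H1 H2 H3 H4 H5]; split; rewrite -?E // => a b; rewrite -E.
  exact: H4.
exact: H5.
Qed.

Lemma one_face l : face (ser_one R) l 0 0 0 0.
Proof.
have H1 : ser_one R 0 0 != 0 by rewrite /ser_one /= oner_neq0.
by split=> // a b; case: a => [|a]; case: b => [|b]; rewrite /ser_one ?eqxx.
Qed.

Lemma z_face l : face (ser_z R) l 1 0 1 0.
Proof.
have H1 : ser_z R 1 0 != 0 by rewrite /ser_z /= oner_neq0.
by split=> // a b; case: a => [|[|a]]; case: b => [|b]; rewrite /ser_z ?eqxx.
Qed.

Lemma w_face l : face (ser_w R) l 0 1 0 1.
Proof.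
have H1 : ser_w R 0 1 != 0 by rewrite /ser_w /= oner_neq0.
by split=> // a b; case: a => [|a]; case: b => [|[|b]]; rewrite /ser_w ?eqxx.
Qed.

Lemma of1_face (pc : nat -> R[i]) (delta : nat) l :
  (forall i, (i < delta)%N -> pc i = 0) -> pc delta != 0 ->
  face (ser_of1 pc) l delta 0 delta 0.
Proof.
move=> Hlow Hd.
have supp a b : ser_of1 pc a b != 0 -> b = 0%N /\ (delta <= a)%N.
  case: b => [|b]; rewrite /ser_of1 /= ?eqxx // => Ha; split=> //.
  by rewrite leqNgt; apply/negP => /Hlow E; rewrite E eqxx in Ha.
split=> // a b /supp [-> Ha]; rewrite /wt !mulr0 !addr0 ?ler_nat //.
by move/eqP; rewrite eqr_nat => /eqP ->; rewrite leqnn.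
Qed.

Lemma mul_supp F G a b : ser_mul F G a b != 0 ->
  exists i j, [/\ (i <= a)%N, (j <= b)%N, F i j != 0 & G (a - i)%N (b - j)%N != 0].
Proof.
move=> /(sum2_neq0 (f := fun i j => F i j * G (a - i)%N (b - j)%N)) [i [j [Hi Hj]]].
by rewrite mulf_eq0 negb_or => /andP[H1 H2]; exists i, j.
Qed.

Lemma comp_supp g P Q a b : ser_comp g P Q a b != 0 ->
  exists i j, g i j != 0 /\ ser_mul (ser_pow P i) (ser_pow Q j) a b != 0.
Proof.
move=> /(sum2_neq0 (f := fun i j => g i j * ser_mul (ser_pow P i) (ser_pow Q j) a b)).
by move=> [i [j [_ _]]]; rewrite mulf_eq0 negb_or => /andP[H1 H2]; exists i, j.
Qed.

Section Product.
Variables (F G : ser R) (l : R) (pa1 pb1 va1 vb1 pa2 pb2 va2 vb2 : nat).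
Hypotheses (l0 : 0 < l) (EF : face F l pa1 pb1 va1 vb1)
  (EG : face G l pa2 pb2 va2 vb2).

Lemma mul_face_terms a b i j : (i <= a)%N -> (j <= b)%N -> F i j != 0 ->
  G (a - i)%N (b - j)%N != 0 -> wt l a b <= wt l (pa1 + pa2) (pb1 + pb2) ->
  [/\ wt l i j = wt l pa1 pb1, (pa1 <= i <= va1)%N & (pa2 <= a - i <= va2)%N].
Proof.
move=> Hi Hj Hf Hg Hw; have [_ _ _ Fs Fl] := EF; have [_ _ _ Gs Gl] := EG.
have h1 := Fs _ _ Hf; have h2 := Gs _ _ Hg.
rewrite wtD in Hw; rewrite (wtB l Hi Hj) in h2.
have e1 : wt l i j = wt l pa1 pb1 by lra.
have e2 : wt l (a - i) (b - j) = wt l pa2 pb2 by rewrite (wtB l Hi Hj); lra.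
by split; [|exact: Fl Hf e1|exact: Gl Hg e2].
Qed.

(* The extreme points of the product face have a single contributing term. *)
Lemma mul_left_end : ser_mul F G (pa1 + pa2) (pb1 + pb2) != 0.
Proof.
have [F1 _ _ _ _] := EF; have [G1 _ _ _ _] := EG.
rewrite /ser_mul (sum2_single (f := fun i j =>
  F i j * G (pa1 + pa2 - i)%N (pb1 + pb2 - j)%N) (i0 := pa1) (j0 := pb1)).
- by rewrite !addKn mulf_neq0.
- by rewrite ltnS leq_addr.
- by rewrite ltnS leq_addr.
move=> i j; rewrite !ltnS => Hi Hj; rewrite mulf_eq0 negb_or => /andP[Hf Hg].
have [e1 /andP[Hi1 _] /andP[Hi2 _]] := mul_face_terms Hi Hj Hf Hg (lexx _).
have ei : i = pa1 by lia.
by subst i; split=> //; exact: wt_inj l0 e1.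
Qed.

Lemma mul_right_end : ser_mul F G (va1 + va2) (vb1 + vb2) != 0.
Proof.
have [_ F2 Fe _ _] := EF; have [_ G2 Ge _ _] := EG.
rewrite /ser_mul (sum2_single (f := fun i j =>
  F i j * G (va1 + va2 - i)%N (vb1 + vb2 - j)%N) (i0 := va1) (j0 := vb1)).
- by rewrite !addKn mulf_neq0.
- by rewrite ltnS leq_addr.
- by rewrite ltnS leq_addr.
move=> i j; rewrite !ltnS => Hi Hj; rewrite mulf_eq0 negb_or => /andP[Hf Hg].
have Hle : wt l (va1 + va2) (vb1 + vb2) <= wt l (pa1 + pa2) (pb1 + pb2).
  by rewrite !wtD Fe Ge.
have [e1 /andP[_ Hi1] /andP[_ Hi2]] := mul_face_terms Hi Hj Hf Hg Hle.
have ei : i = va1 by lia.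
by subst i; split=> //; exact: wt_inj l0 (etrans e1 Fe).
Qed.

Lemma mul_face :
  face (ser_mul F G) l (pa1 + pa2) (pb1 + pb2) (va1 + va2) (vb1 + vb2).
Proof.
have [_ _ Fe Fs _] := EF; have [_ _ Ge Gs _] := EG.
split; [exact: mul_left_end | exact: mul_right_end | by rewrite !wtD Fe Ge | |].
- move=> a b /mul_supp [i [j [Hi Hj Hf Hg]]].
  by have := Fs _ _ Hf; have := Gs _ _ Hg; rewrite wtB // wtD; lra.
- move=> a b /mul_supp [i [j [Hi Hj Hf Hg]]] Hw.
  have Hle : wt l a b <= wt l (pa1 + pa2) (pb1 + pb2) by rewrite Hw.
  have [_ /andP[? ?] /andP[? ?]] := mul_face_terms Hi Hj Hf Hg Hle.
  lia.
Qed.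

End Product.

Lemma pow_face F l pa pb va vb : 0 < l -> face F l pa pb va vb ->
  forall i, face (ser_pow F i) l (i * pa) (i * pb) (i * va) (i * vb).
Proof.
move=> l0 EF; elim=> [|i IH]; first by rewrite !mul0n; exact: one_face.
by rewrite !mulSn; exact: mul_face.
Qed.

Lemma wt_combination l mu (pa qa qb i j : nat) : wt l qa qb = mu * pa%:R ->
  wt l (i * pa + j * qa) (j * qb) = pa%:R * wt mu i j.
Proof.
rewrite /wt => Hq.
rewrite natrD !natrM.
have -> : (qa%:R : R) = mu * pa%:R - l * qb%:R by lra.
ring.
Qed.

Lemma combination_mono l mu (pa qa qb i j i' j' : nat) :
  0 < l -> (0 < qb)%N -> 0 < mu ->
  wt l qa qb = mu * pa%:R -> wt mu i j = wt mu i' j' ->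
  (i' <= i)%N = (i' * pa + j' * qa <= i * pa + j * qa)%N.
Proof.
move=> l0 qb0 mu0 Hq Hij.
have lqb : 0 < l * qb%:R by rewrite mulr_gt0 // ltr0n.
have K : mu * ((i * pa + j * qa)%:R - (i' * pa + j' * qa)%:R) =
         (i%:R - i'%:R) * (l * qb%:R).
  move: Hq Hij; rewrite /wt !natrD !natrM => Hq Hij.
  have -> : (qa%:R : R) = mu * pa%:R - l * qb%:R by lra.
  rewrite (_ : mu * _ = mu * pa%:R * (i%:R - i'%:R) +
            (mu * j%:R - mu * j'%:R) * (mu * pa%:R - l * qb%:R)); last by ring.
  rewrite (_ : mu * j%:R - mu * j'%:R = i'%:R - i%:R); last by lra.
  ring.
rewrite -(ler_nat R) -[RHS](ler_nat R) -subr_ge0 -[RHS]subr_ge0.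
by rewrite -(pmulr_lge0 _ lqb) -K pmulr_rge0.
Qed.

Section Composition.
Variables (g P Q : ser R) (l mu : R).
Variables (pa qpa qpb qva qvb gpi gpj gvi gvj : nat).
Hypotheses (l0 : 0 < l) (pa0 : (0 < pa)%N) (qpb0 : (0 < qpb)%N) (qvb0 : (0 < qvb)%N).
Hypotheses (EP : face P l pa 0 pa 0) (EQ : face Q l qpa qpb qva qvb).
Hypotheses (Hmu : wt l qpa qpb = mu * pa%:R) (Eg : face g mu gpi gpj gvi gvj).

Let T i j := ser_mul (ser_pow P i) (ser_pow Q j).

Lemma comp_wt_right : wt l qva qvb = mu * pa%:R.
Proof. by have [_ _ <- _ _] := EQ. Qed.

Lemma comp_mu_gt0 : 0 < mu.
Proof.
have pa0r : 0 < (pa%:R : R) by rewrite ltr0n.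
have : 0 < mu * pa%:R.
  have : 0 < l * qpb%:R by rewrite mulr_gt0 ?ltr0n.
  by rewrite -Hmu /wt; have := ler0n R qpa; lra.
by rewrite pmulr_lgt0.
Qed.

Lemma monomial_face i j :
  face (T i j) l (i * pa + j * qpa) (j * qpb) (i * pa + j * qva) (j * qvb).
Proof.
by have := mul_face l0 (pow_face l0 EP i) (pow_face l0 EQ j); rewrite muln0 add0n.
Qed.

Lemma comp_face_terms a b i j : g i j != 0 -> T i j a b != 0 ->
  wt l a b <= pa%:R * wt mu gpi gpj ->
  [/\ wt mu i j = wt mu gpi gpj, (gpi <= i <= gvi)%N &
      (i * pa + j * qpa <= a <= i * pa + j * qva)%N].
Proof.
move=> Hg HT Hw; have [_ _ _ gs gl] := Eg; have [_ _ _ Ts Tl] := monomial_face i j.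
have pa0r : 0 < (pa%:R : R) by rewrite ltr0n.
have h1 := Ts _ _ HT; rewrite (wt_combination _ _ Hmu) in h1.
have h2 : pa%:R * wt mu gpi gpj <= pa%:R * wt mu i j by rewrite ler_pM2l // gs.
have e1 : wt mu i j = wt mu gpi gpj.
  by apply/eqP; rewrite eq_le gs // andbT -(ler_pM2l pa0r); lra.
split=> //; first exact: gl Hg e1.
by apply: Tl HT _; rewrite (wt_combination _ _ Hmu) e1; lra.
Qed.

(* At either extreme point of the expected face only the term (i, j) at the
   corresponding endpoint of the mu-face of g contributes. *)
Lemma comp_left_end : ser_comp g P Q (gpi * pa + gpj * qpa) (gpj * qpb) != 0.
Proof.
have [g1 _ _ _ _] := Eg; have mu0 := comp_mu_gt0.
rewrite /ser_comp (sum2_single (f := fun i j =>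
  g i j * T i j (gpi * pa + gpj * qpa) (gpj * qpb)) (i0 := gpi) (j0 := gpj)).
- by have [T1 _ _ _ _] := monomial_face gpi gpj; rewrite mulf_neq0.
- by rewrite ltnS; nia.
- by rewrite ltnS; nia.
move=> i j _ _; rewrite mulf_eq0 negb_or => /andP[Hg HT].
have Hle : wt l (gpi * pa + gpj * qpa) (gpj * qpb) <= pa%:R * wt mu gpi gpj.
  by rewrite (wt_combination _ _ Hmu).
have [e1 /andP[Hi _] /andP[Ha _]] := comp_face_terms Hg HT Hle.
have Hi' : (i <= gpi)%N by rewrite (combination_mono l0 qpb0 mu0 Hmu (esym e1)).
have Ei : i = gpi by apply/eqP; rewrite eqn_leq Hi Hi'.
by subst i; split=> //; exact: wt_inj mu0 e1.
Qed.

Lemma comp_right_end : ser_comp g P Q (gvi * pa + gvj * qva) (gvj * qvb) != 0.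
Proof.
have [_ g2 ge _ _] := Eg; have mu0 := comp_mu_gt0.
rewrite /ser_comp (sum2_single (f := fun i j =>
  g i j * T i j (gvi * pa + gvj * qva) (gvj * qvb)) (i0 := gvi) (j0 := gvj)).
- by have [_ T2 _ _ _] := monomial_face gvi gvj; rewrite mulf_neq0.
- by rewrite ltnS; nia.
- by rewrite ltnS; nia.
move=> i j _ _; rewrite mulf_eq0 negb_or => /andP[Hg HT].
have Hle : wt l (gvi * pa + gvj * qva) (gvj * qvb) <= pa%:R * wt mu gpi gpj.
  by rewrite (wt_combination _ _ comp_wt_right) ge.
have [e1 /andP[_ Hi] /andP[_ Ha]] := comp_face_terms Hg HT Hle; rewrite ge in e1.
have Hi' : (gvi <= i)%N by rewrite (combination_mono l0 qvb0 mu0 comp_wt_right e1).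
have Ei : i = gvi by apply/eqP; rewrite eqn_leq Hi Hi'.
by subst i; split=> //; exact: wt_inj mu0 e1.
Qed.

Lemma comp_face : face (ser_comp g P Q) l
  (gpi * pa + gpj * qpa) (gpj * qpb) (gvi * pa + gvj * qva) (gvj * qvb).
Proof.
have [_ _ ge gs _] := Eg; have mu0 := comp_mu_gt0.
have El : wt l (gpi * pa + gpj * qpa) (gpj * qpb) = pa%:R * wt mu gpi gpj.
  exact: wt_combination.
split; [exact: comp_left_end | exact: comp_right_end | | |].
- by rewrite El (wt_combination _ _ comp_wt_right) ge.
- move=> a b /comp_supp [i [j [Hg HT]]].
  have [_ _ _ Ts _] := monomial_face i j.
  have h1 := Ts _ _ HT; rewrite (wt_combination _ _ Hmu) in h1.
  by rewrite El; apply: le_trans h1; rewrite ler_pM2l ?ltr0n // gs.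
- move=> a b /comp_supp [i [j [Hg HT]]] Hw.
  have Hle : wt l a b <= pa%:R * wt mu gpi gpj by rewrite Hw El.
  have [e1 /andP[Hi Hi2] /andP[Ha1 Ha2]] := comp_face_terms Hg HT Hle.
  apply/andP; split.
  + by apply: leq_trans Ha1; rewrite -(combination_mono l0 qpb0 mu0 Hmu e1).
  + apply: leq_trans Ha2 _; rewrite ge in e1.
    by rewrite -(combination_mono l0 qvb0 mu0 comp_wt_right (esym e1)).
Qed.

End Composition.
End Faces.

Section OrderOne.
Variable R : realType.

Lemma comp_of1_w (pc : nat -> R[i]) (P Q : ser R) :
  ser_comp (ser_of1 pc) P Q =2 ser_comp (ser_of1 pc) P (ser_w R).
Proof.
move=> a b; apply: eq_bigr => i _; apply: eq_bigr => j _.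
by case: (nat_of_ord j) => [|j'] //; rewrite /ser_of1 /= !mul0r.
Qed.

Lemma skew_iter_fst_face (pc : nat -> R[i]) (q : ser R) (delta : nat) :
  (1 <= delta)%N -> (forall i, (i < delta)%N -> pc i = 0) -> pc delta != 0 ->
  forall n l, 0 < l -> face (skew_iter pc q n).1 l (delta ^ n) 0 (delta ^ n) 0.
Proof.
move=> d1 Hlow Hd; elim=> [|n IH] l l0; first by rewrite expn0; exact: z_face.
apply: face_ext (fun a b => esym (comp_of1_w _ _ _ a b)) _.
have pa0 : (0 < delta ^ n)%N by rewrite expn_gt0 d1.
have Hm : wt l 0 1 = (l / (delta ^ n)%:R) * (delta ^ n)%:R.
  by rewrite /wt divfK ?mulr1 ?add0r // pnatr_eq0 -lt0n.
have := comp_face l0 pa0 (ltn0Sn 0) (ltn0Sn 0) (IH l l0) (w_face l) Hm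
  (of1_face _ Hlow Hd).
by rewrite !muln0 !addn0 mul0n expnS.
Qed.

End OrderOne.

Section NewtonPolygon.
Variable R : realType.
Implicit Types (g : ser R) (l : R).

Lemma newton_supp g i j : g i j != 0 -> newton g (i%:R, j%:R).
Proof.
move=> Hg; exists 1%N, (fun _ => 1), (fun _ => (i%:R, j%:R)).
split=> [t|]; first exact: ler01.
split; first by rewrite big_ord1.
by split=> [t|]; [exists i, j | rewrite !big_ord1 !mul1r].
Qed.

Lemma newton_up g (x : R * R) (e : R) : newton g x -> 0 <= e ->
  newton g (x.1, x.2 + e).
Proof.
case: x => x1 x2 [n [lam [pt [H0 [H1 [H2 E]]]]]] He.
exists n, lam, (fun t => ((pt t).1, (pt t).2 + e)).
split=> //; split=> //; split.
- move=> t; have [i [j [Hg [Hi Hj]]]] := H2 t.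
  by exists i, j; split=> //; split=> //=; lra.
- case: E => -> ->; congr pair.
  rewrite [RHS](eq_bigr (fun t => lam t * (pt t).2 + lam t * e)); last first.
    by move=> t _ /=; rewrite mulrDr.
  by rewrite big_split /= -mulr_suml H1 mul1r.
Qed.

Lemma newton_supporting g l c lo hi : 0 < l ->
  (forall i j, g i j != 0 -> c <= wt l i j) ->
  (forall i j, g i j != 0 -> wt l i j = c -> lo <= i%:R /\ i%:R <= hi) ->
  forall x, newton g x ->
  c <= x.1 + l * x.2 /\ (x.1 + l * x.2 = c -> lo <= x.1 /\ x.1 <= hi).
Proof.
move=> l0 Hs Hl x [n [lam [pt [H0 [H1 [H2 ->]]]]]] /=.
have Hpt t : c <= (pt t).1 + l * (pt t).2 /\
    ((pt t).1 + l * (pt t).2 = c -> lo <= (pt t).1 /\ (pt t).1 <= hi).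
  have [i [j [Hg [Hi Hj]]]] := H2 t.
  have := Hs i j Hg; have := Hl i j Hg; rewrite /wt => hl hc.
  have hj : l * j%:R <= l * (pt t).2 by rewrite ler_pM2l.
  split=> [|Heq]; first lra.
  have -> : (pt t).1 = i%:R by lra.
  by apply: hl; lra.
have -> : \sum_t lam t * (pt t).1 + l * \sum_t lam t * (pt t).2 =
          \sum_t lam t * ((pt t).1 + l * (pt t).2).
  by rewrite mulr_sumr -big_split; apply: eq_bigr => t _ /=; ring.
have ge0 t : 0 <= lam t * ((pt t).1 + l * (pt t).2 - c).
  by apply: mulr_ge0 => //; rewrite subr_ge0; exact: (Hpt t).1.
have -> : \sum_t lam t * ((pt t).1 + l * (pt t).2) =
          \sum_t lam t * ((pt t).1 + l * (pt t).2 - c) + c.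
  rewrite -[X in _ + X]mul1r -H1 mulr_suml -big_split.
  by apply: eq_bigr => t _ /=; ring.
split=> [|Heq]; first by rewrite lerDr sumr_ge0.
have Z : \sum_t lam t * ((pt t).1 + l * (pt t).2 - c) = 0 by lra.
have Z0 := psumr_eq0P (fun t _ => ge0 t) Z.
have Ht t : lam t = 0 \/ (lo <= (pt t).1 /\ (pt t).1 <= hi).
  move/eqP: (Z0 t isT).
  rewrite mulf_eq0 subr_eq0 => /orP[/eqP|/eqP/(Hpt t).2]; by [left|right].
split.
- rewrite -[lo]mul1r -H1 mulr_suml; apply: ler_sum => t _.
  by case: (Ht t) => [->|[h _]]; rewrite ?mul0r // ler_wpM2l.
- rewrite -[hi]mul1r -H1 mulr_suml; apply: ler_sum => t _.
  by case: (Ht t) => [->|[_ h]]; rewrite ?mul0r // ler_wpM2l.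
Qed.

Lemma extreme_vertex g l (c lo hi : R) i0 j0 : 0 < l ->
  (forall i j, g i j != 0 -> c <= wt l i j) ->
  (forall i j, g i j != 0 -> wt l i j = c -> lo <= i%:R /\ i%:R <= hi) ->
  g i0 j0 != 0 -> wt l i0 j0 = c -> i0%:R = lo \/ i0%:R = hi ->
  is_vertex (newton g) (i0%:R, j0%:R).
Proof.
move=> l0 Hs Hl Hg Hc Hlh; split; first exact: newton_supp.
case=> x1 x2; case=> y1 y2 t Nx Ny /andP[t0 t1] [E1 E2].
have [Lx Lxe] := newton_supporting l0 Hs Hl Nx.
have [Ly Lye] := newton_supporting l0 Hs Hl Ny.
move: Lx Lxe Ly Lye Hc; rewrite /wt /= E1 E2 => Lx Lxe Ly Lye Hc.
have ex : x1 + l * x2 = c by nra.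
have ey : y1 + l * y2 = c by nra.
have [hx1 hx2] := Lxe ex; have [hy1 hy2] := Lye ey.
have e1 : x1 = y1 by case: Hlh => H; nra.
have e2 : x2 = y2 by apply: (mulfI (lt0r_neq0 l0)); lra.
by rewrite e1 e2.
Qed.

Lemma between_not_vertex g l (a b c : R * R) : 0 < l ->
  newton g a -> newton g c -> a.1 < b.1 -> b.1 < c.1 ->
  a.1 + l * a.2 <= b.1 + l * b.2 -> c.1 + l * c.2 <= b.1 + l * b.2 ->
  ~ is_vertex (newton g) b.
Proof.
case: a => a1 a2; case: b => b1 b2; case: c => c1 c2 /= l0 Na Nc h1 h2 h3 h4 [_ Hext].
have ca : c1 - a1 != 0 by rewrite subr_eq0; apply/eqP => E; lra.
set t := (c1 - b1) / (c1 - a1).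
have t0 : 0 < t by rewrite /t divr_gt0 //; lra.
have t1 : t < 1 by rewrite /t ltr_pdivrMr; lra.
have tx : t * a1 + (1 - t) * c1 = b1 by rewrite /t; field.
(* the point of the chord above b lies below b; lift the chord to pass through b *)
set yi := t * a2 + (1 - t) * c2.
have Hy : yi <= b2.
  rewrite -(ler_pM2l l0).
  have : t * (a1 + l * a2) + (1 - t) * (c1 + l * c2) <= b1 + l * b2 by nra.
  by rewrite -tx /yi; lra.
have He : 0 <= b2 - yi by lra.
have E : (b1, b2) = (t * a1 + (1 - t) * c1,
                     t * (a2 + (b2 - yi)) + (1 - t) * (c2 + (b2 - yi))).
  by rewrite tx /yi; congr pair; ring.
have [] := Hext _ _ t (newton_up Na He) (newton_up Nc He) (introT andP (conj t0 t1)) E.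
lra.
Qed.

Lemma face_prec_vertex g l pa pb va vb : 0 < l -> face g l pa pb va vb ->
  (pa < va)%N -> prec_vertex (newton g) (pa%:R, pb%:R) (va%:R, vb%:R).
Proof.
move=> l0 [g1 g2 ge gs gl] pv.
have Hl i j : g i j != 0 -> wt l i j = wt l pa pb ->
    (pa%:R <= i%:R :> R) /\ (i%:R <= va%:R :> R).
  by move=> Hg Hw; have /andP[h1 h2] := gl i j Hg Hw; rewrite !ler_nat.
split; [|split; [|split]].
- exact: extreme_vertex l0 gs Hl g1 erefl (or_introl erefl).
- exact: extreme_vertex l0 gs Hl g2 (esym ge) (or_intror erefl).
- by rewrite ltr_nat.
- move=> x Vx [h1 h2]; have [Nx _] := Vx.
  have [Lx _] := newton_supporting l0 gs Hl Nx.
  apply: (between_not_vertex (a := (pa%:R, pb%:R)) (c := (va%:R, vb%:R)) l0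
    (newton_supp g1) (newton_supp g2) h1 h2 Lx _ Vx).
  by rewrite /= -[_ + _]/(wt l va vb) -ge.
Qed.

Lemma slope_yintercept (p1 p2 v1 v2 l : R) : 0 < l ->
  p1 + l * p2 = v1 + l * v2 -> p1 < v1 ->
  slope (p1, p2) (v1, v2) = - l^-1 /\
  yintercept (p1, p2) (v1, v2) = (p1 + l * p2) / l.
Proof.
move=> l0 He hp.
have hv : v1 - p1 != 0 by rewrite subr_eq0; apply/eqP => E; lra.
have l0' : l != 0 by rewrite lt0r_neq0.
have Es : slope (p1, p2) (v1, v2) = - l^-1.
  rewrite /slope /= (_ : v2 - p2 = - (v1 - p1) / l); first by field; rewrite hv l0'.
  by apply: (mulfI l0'); rewrite mulrCA divff // mulr1; lra.
by split=> //; rewrite /yintercept Es /=; field.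
Qed.

Lemma face_summary g l pa pb va vb : 0 < l -> face g l pa pb va vb -> (pa < va)%N ->
  let P := (pa%:R, pb%:R) in let V := (va%:R, vb%:R) in
  [/\ prec_vertex (newton g) P V, slope P V = - l^-1 & yintercept P V = wt l va vb / l].
Proof.
move=> l0 Eg pv P V; have [_ _ e _ _] := Eg.
have pvR : (pa%:R : R) < va%:R by rewrite ltr_nat.
have [Es Ey] := slope_yintercept l0 e pvR.
by split; [exact: face_prec_vertex l0 Eg pv | exact: Es | rewrite /P /V Ey -e].
Qed.

End NewtonPolygon.

Section MinimalWeight.
Variable R : realType.
Implicit Types (g : ser R) (l : R).

Lemma weight_box l (c : R) : 0 < l ->
  exists K, forall i j, wt l i j <= c -> (i < K)%N /\ (j < K)%N.
Proof.
move=> l0; set c' := `|c|.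
have c0 : 0 <= c' := normr_ge0 c.
exists (Num.Def.archi_bound c' + Num.Def.archi_bound (c' / l))%N => i j Hw.
have Hwc : wt l i j <= c' := le_trans Hw (ler_norm c).
have hj : 0 <= l * j%:R by apply: mulr_ge0; rewrite ?ler0n ?ltW.
have hi : 0 <= (i%:R : R) := ler0n R i.
split.
- have : (i%:R < (Num.Def.archi_bound c')%:R :> R).
    by apply: le_lt_trans (archi_boundP c0); move: Hwc; rewrite /wt; lra.
  by rewrite ltr_nat => h; apply: leq_trans h _; rewrite leq_addr.
- have : (j%:R < (Num.Def.archi_bound (c' / l))%:R :> R).
    apply: le_lt_trans (archi_boundP (divr_ge0 c0 (ltW l0))).
    by rewrite ler_pdivlMr // mulrC; move: Hwc; rewrite /wt; lra.
  by rewrite ltr_nat => h; apply: leq_trans h _; rewrite leq_addl.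
Qed.

Lemma min_weight_point g l (dir : bool) i1 j1 : 0 < l -> g i1 j1 != 0 ->
  exists i0 j0, [/\ g i0 j0 != 0,
    (forall i j, g i j != 0 -> wt l i0 j0 <= wt l i j) &
    (forall i j, g i j != 0 -> wt l i j = wt l i0 j0 ->
       if dir then (i0 <= i)%N else (i <= i0)%N)].
Proof.
move=> l0 H1; set w1 := wt l i1 j1.
have [K box] := weight_box w1 l0.
have [hi1 hj1] := box i1 j1 (lexx _).
pose P1 := [pred x : 'I_K * 'I_K | (g x.1 x.2 != 0) && (wt l x.1 x.2 <= w1)].
have P1x1 : P1 (Ordinal hi1, Ordinal hj1) by rewrite /= H1 lexx.
case: (arg_minP (fun x : 'I_K * 'I_K => wt l x.1 x.2) P1x1).
move=> m /andP[Hgm Hwm] Hm.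
pose P2 := [pred x | P1 x && (wt l x.1 x.2 == wt l m.1 m.2)].
pose F2 (x : 'I_K * 'I_K) : R := if dir then (x.1 : nat)%:R else - (x.1 : nat)%:R.
have P2m : P2 m by rewrite /= Hgm Hwm eqxx.
case: (arg_minP F2 P2m) => m2 /andP[/andP[Hg2 Hw2] /eqP E2] Hm2.
exists m2.1, m2.2; split=> //.
- move=> i j Hg; rewrite E2; case: (leP (wt l i j) w1) => h.
    by have [hi hj] := box i j h; apply: (Hm (Ordinal hi, Ordinal hj)); rewrite /= Hg h.
  exact: le_trans Hwm (ltW h).
- move=> i j Hg Hw; have h : wt l i j <= w1 by rewrite Hw E2.
  have [hi hj] := box i j h.
  have := Hm2 (Ordinal hi, Ordinal hj); rewrite /= Hg h Hw E2 eqxx => /(_ isT).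
  by rewrite /F2; case: (dir); rewrite ?lerN2 ler_nat.
Qed.

Lemma min_weight_vertex g l (dir : bool) i1 j1 : 0 < l -> g i1 j1 != 0 ->
  exists i0 j0, [/\ g i0 j0 != 0,
    (forall i j, g i j != 0 -> wt l i0 j0 <= wt l i j),
    (forall i j, g i j != 0 -> wt l i j = wt l i0 j0 ->
       if dir then (i0 <= i)%N else (i <= i0)%N),
    is_vertex (newton g) (i0%:R, j0%:R) &
    (forall x, newton g x -> wt l i0 j0 <= x.1 + l * x.2 /\
       (x.1 + l * x.2 = wt l i0 j0 -> if dir then i0%:R <= x.1 else x.1 <= i0%:R))].
Proof.
move=> l0 H1; have [i0 [j0 [H0 Hmin Htie]]] := min_weight_point dir l0 H1.
exists i0, j0.
pose lo : R := if dir then i0%:R else 0.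
pose hi : R := if dir then wt l i0 j0 else i0%:R.
have Hl i j : g i j != 0 -> wt l i j = wt l i0 j0 -> lo <= i%:R /\ i%:R <= hi.
  move=> Hg Hw; have := Htie i j Hg Hw; rewrite /lo /hi.
  have : 0 <= l * j%:R by apply: mulr_ge0; rewrite ?ler0n ?ltW.
  case: (dir) => /= hj; rewrite ler_nat => ->; split=> //.
  by rewrite -Hw /wt; lra.
have Hend : i0%:R = lo \/ i0%:R = hi by rewrite /lo /hi; case: (dir); [left|right].
split=> //; first exact: extreme_vertex l0 Hmin Hl H0 erefl Hend.
move=> x Nx; have [h1 h2] := newton_supporting l0 Hmin Hl Nx.
by split=> // /h2; rewrite /lo /hi; case: (dir) => -[].
Qed.

End MinimalWeight.

Section VertexList.
Variables (R : realType) (q : ser R) (s : nat) (vn vm : nat -> nat).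
Hypotheses (q_neq0 : exists i j, q i j != 0)
  (vmono : forall i, (1 <= i < s)%N -> (vn i < vn i.+1)%N /\ (vm i.+1 < vm i)%N)
  (vertices : forall v : R * R, is_vertex (newton q) v <->
     exists i, (1 <= i <= s)%N /\ v = ((vn i)%:R, (vm i)%:R)).

Lemma vn_lt i j : (1 <= i)%N -> (i < j)%N -> (j <= s)%N -> (vn i < vn j)%N.
Proof.
move=> hi; elim: j => // j IH; rewrite ltnS leq_eqVlt => /orP[/eqP <-|hij] hjs.
  by have [] := vmono (introT andP (conj hi hjs)).
apply: ltn_trans (IH hij (ltnW hjs)) _.
by have [] := vmono (introT andP (conj (leq_trans hi (ltnW hij)) hjs)).
Qed.

Lemma vn_le i j : (1 <= i)%N -> (i <= j)%N -> (j <= s)%N -> (vn i <= vn j)%N.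
Proof.
by move=> hi; rewrite leq_eqVlt => /orP[/eqP->//|hij] hjs; apply/ltnW/vn_lt.
Qed.

Lemma vertex_listed m : (1 <= m <= s)%N -> is_vertex (newton q) ((vn m)%:R, (vm m)%:R).
Proof. by move=> hm; apply/vertices; exists m. Qed.

Lemma vertex_index i0 j0 : is_vertex (newton q) (i0%:R, j0%:R) ->
  exists m, [/\ (1 <= m <= s)%N, i0 = vn m & j0 = vm m].
Proof.
move=> /vertices [m [hm [E1 E2]]]; exists m.
by split=> //; apply/eqP; rewrite -(eqr_nat R) ?E1 ?E2.
Qed.

Lemma vertex_convex (l : R) a b c : 0 < l ->
  (1 <= a)%N -> (a < b)%N -> (b < c)%N -> (c <= s)%N ->
  wt l (vn a) (vm a) <= wt l (vn b) (vm b) ->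
  wt l (vn c) (vm c) <= wt l (vn b) (vm b) -> False.
Proof.
move=> l0 ha hab hbc hcs hA hC.
have hb : (1 <= b)%N := leq_trans ha (ltnW hab).
have hbs : (b <= s)%N := ltnW (leq_trans hbc hcs).
have hcs' : (1 <= c <= s)%N by rewrite hcs (leq_trans hb (ltnW hbc)).
have has : (1 <= a <= s)%N by rewrite ha (leq_trans (ltnW hab) hbs).
have lt_ab : (vn a)%:R < (vn b)%:R :> R by rewrite ltr_nat vn_lt.
have lt_bc : (vn b)%:R < (vn c)%:R :> R by rewrite ltr_nat vn_lt.
rewrite /wt in hA hC.
apply: (between_not_vertex (a := ((vn a)%:R, (vm a)%:R)) (b := ((vn b)%:R, (vm b)%:R))
  (c := ((vn c)%:R, (vm c)%:R)) l0 (vertex_listed has).1 (vertex_listed hcs').1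
  lt_ab lt_bc hA hC).
by apply: vertex_listed; rewrite hb hbs.
Qed.

Section Edge.
Variable m : nat.
Hypothesis hm : (1 <= m < s)%N.

(* The weight in which the edge from vertex m to vertex m+1 is a face. *)
Definition edge_wt : R := ((vn m.+1)%:R - (vn m)%:R) / ((vm m)%:R - (vm m.+1)%:R).
Local Notation l := edge_wt.
Local Notation c := (wt l (vn m) (vm m)).

Lemma edge_wt_gt0 : 0 < l.
Proof.
have [hn hv] := vmono hm.
by rewrite /edge_wt divr_gt0 // subr_gt0 ltr_nat.
Qed.

Lemma edge_wt_next : wt l (vn m.+1) (vm m.+1) = c.
Proof.
have [_ hv] := vmono hm.
have Hne : (vm m)%:R - (vm m.+1)%:R != 0 :> R.
  by rewrite subr_eq0 eqr_nat; apply/negP => /eqP E; rewrite E ltnn in hv.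
by rewrite /wt /edge_wt; field.
Qed.

Lemma vertices_above_edge m' : (1 <= m' <= s)%N -> c <= wt l (vn m') (vm m').
Proof.
case/andP: hm => m1 ms; move=> /andP[h1 h2]; rewrite leNgt; apply/negP => Hlt.
have l0 := edge_wt_gt0; have Enext := edge_wt_next.
case: (ltngtP m' m) => [hlt|hgt|E]; last by rewrite E ltxx in Hlt.
  by apply: (vertex_convex l0 h1 hlt (ltnSn m) ms); rewrite ?Enext // ltW.
move: hgt; rewrite leq_eqVlt => /orP[/eqP E|hgt]; first by rewrite -E Enext ltxx in Hlt.
by apply: (vertex_convex l0 m1 (ltnSn m) hgt h2); rewrite Enext // ltW.
Qed.

Lemma support_above_edge i j : q i j != 0 -> c <= wt l i j.
Proof.
move=> Hq; have [i0 [j0 [_ Hmin _ Hvx _]]] := min_weight_vertex true edge_wt_gt0 Hq.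
have [m' [hm' E1 E2]] := vertex_index Hvx; subst i0 j0.
exact: le_trans (vertices_above_edge hm') (Hmin i j Hq).
Qed.

(* Support points of weight c lie between the two vertices: otherwise an
   extreme minimizer would be a listed vertex outside the edge, and one
   endpoint of the edge could not be a vertex. *)
Lemma edge_support_left i j : q i j != 0 -> wt l i j = c -> (vn m <= i)%N.
Proof.
case/andP: hm => m1 ms; move=> Hq Hw; rewrite leqNgt; apply/negP => Hlt.
have [i0 [j0 [H0 Hmin Htie Hvx _]]] := min_weight_vertex true edge_wt_gt0 Hq.
have e0 : wt l i0 j0 = c by apply/eqP; rewrite eq_le support_above_edge // -Hw Hmin.
have hi0 : (i0 <= i)%N := Htie i j Hq (etrans Hw (esym e0)).
have [m' [/andP[h1 h2] E1 E2]] := vertex_index Hvx; subst i0 j0.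
case: (ltnP m' m) => hmm.
  by apply: (vertex_convex edge_wt_gt0 h1 hmm (ltnSn m) ms); rewrite ?e0 ?edge_wt_next.
by have := leq_trans (vn_le m1 hmm h2) hi0; rewrite leqNgt Hlt.
Qed.

Lemma edge_support_right i j : q i j != 0 -> wt l i j = c -> (i <= vn m.+1)%N.
Proof.
case/andP: hm => m1 ms; move=> Hq Hw; rewrite leqNgt; apply/negP => Hlt.
have [i0 [j0 [H0 Hmin Htie Hvx _]]] := min_weight_vertex false edge_wt_gt0 Hq.
have e0 : wt l i0 j0 = c by apply/eqP; rewrite eq_le support_above_edge // -Hw Hmin.
have hi0 : (i <= i0)%N := Htie i j Hq (etrans Hw (esym e0)).
have [m' [/andP[h1 h2] E1 E2]] := vertex_index Hvx; subst i0 j0.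
case: (ltnP m.+1 m') => hmm.
  by apply: (vertex_convex edge_wt_gt0 m1 (ltnSn m) hmm h2); rewrite ?e0 ?edge_wt_next.
by have := leq_trans hi0 (vn_le h1 hmm ms); rewrite leqNgt Hlt.
Qed.

(* The two endpoints of the edge are monomials of q: the leftmost (resp.
   rightmost) minimizer of the weight is pinned between them. *)
Lemma edge_left_in_support : q (vn m) (vm m) != 0.
Proof.
case/andP: hm => m1 ms; have [i1 [j1 Hq1]] := q_neq0.
have [i0 [j0 [H0 _ _ _ HN]]] := min_weight_vertex true edge_wt_gt0 Hq1.
have [L1 L2] := HN _ (vertex_listed (introT andP (conj m1 (ltnW ms)))).1.
have e0 : wt l i0 j0 = c by apply/eqP; rewrite eq_le support_above_edge // L1.
have Ei : i0 = vn m.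
  apply/eqP; rewrite eqn_leq (edge_support_left H0 e0) andbT -(ler_nat R).
  exact: L2 (esym e0).
by subst i0; rewrite -(wt_inj edge_wt_gt0 e0).
Qed.

Lemma edge_right_in_support : q (vn m.+1) (vm m.+1) != 0.
Proof.
case/andP: hm => m1 ms; have [i1 [j1 Hq1]] := q_neq0.
have [i0 [j0 [H0 _ _ _ HN]]] := min_weight_vertex false edge_wt_gt0 Hq1.
have hm1 : (1 <= m.+1 <= s)%N by rewrite ms.
have [L1 L2] := HN _ (vertex_listed hm1).1.
have e0 : wt l i0 j0 = wt l (vn m.+1) (vm m.+1).
  by apply/eqP; rewrite eq_le edge_wt_next support_above_edge //= -edge_wt_next L1.
have Ei : i0 = vn m.+1.
  apply/eqP; rewrite eqn_leq (edge_support_right H0 (etrans e0 edge_wt_next)).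
  rewrite -(ler_nat R); exact: L2 (esym e0).
by subst i0; rewrite -(wt_inj edge_wt_gt0 e0).
Qed.

Lemma face_of_vertices : face q l (vn m) (vm m) (vn m.+1) (vm m.+1).
Proof.
split.
- exact: edge_left_in_support.
- exact: edge_right_in_support.
- by rewrite edge_wt_next.
- exact: support_above_edge.
- by move=> a b Hq Hw; rewrite (edge_support_left Hq Hw) (edge_support_right Hq Hw).
Qed.

End Edge.
End VertexList.

Section FaceGeometry.
Variable R : realType.

Lemma mid_face (q : ser R) (l1 l2 mu : R) A B g d a3 b3 :
  face q l1 A B g d -> face q l2 g d a3 b3 -> l1 < mu -> mu < l2 ->
  face q mu g d g d.
Proof.
move=> [_ q2 e1 s1 _] [_ _ _ s2 _] h1 h2.
have key i j : q i j != 0 -> wt mu g d <= wt mu i j /\ (wt mu i j = wt mu g d -> i = g).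
  move=> Hq; have := s1 i j Hq; have := s2 i j Hq; rewrite e1 /wt => hs2 hs1.
  case: (leP (d%:R : R) j%:R) => hj.
  - split=> [|Heq]; first nra.
    have ej : (j%:R : R) = d%:R by nra.
    have ei : (i%:R : R) = g%:R by nra.
    by apply/eqP; rewrite -(eqr_nat R) ei.
  - by split=> [|Heq]; [nra | exfalso; nra].
split=> //; first by move=> a b /key [].
by move=> a b Hq /(key _ _ Hq).2 ->; rewrite leqnn.
Qed.

Lemma face_weights_increase (q : ser R) (l1 l2 : R) A B g d a3 b3 : 0 < l2 ->
  face q l1 A B g d -> face q l2 g d a3 b3 -> (g < a3)%N -> l1 < l2.
Proof.
move=> l20 [_ _ e1 s1 in1] [_ q3 e2 _ _] ga3.
have hne : wt l1 g d != wt l1 a3 b3.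
  apply/eqP => Heq; have /andP[_ h] := in1 _ _ q3 (etrans (esym Heq) (esym e1)).
  by move: ga3; rewrite ltnNge h.
have hlt : wt l1 g d < wt l1 a3 b3 by rewrite lt_neqAle hne -e1 s1.
have ga3r : (g%:R : R) < a3%:R by rewrite ltr_nat.
move: hlt e2; rewrite /wt => hlt e2.
have db : (b3%:R : R) < d%:R by nra.
nra.
Qed.

End FaceGeometry.

Section GeometricSums.
Variable R : realType.
Implicit Types a b : R.

Lemma gsumS a b n : gsum a b n.+1 = a ^+ n + b * gsum a b n.
Proof.
rewrite /gsum big_ord_recl /= subn0 expr0 mulr1; congr (_ + _).
rewrite mulr_sumr; apply: eq_bigr => i _ /=.
rewrite /bump leq0n add1n (_ : (n - i.+1 = n.-1 - i)%N); last by lia.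
by rewrite exprS; ring.
Qed.

Lemma gsum_mul a b n : (a - b) * gsum a b n = a ^+ n - b ^+ n.
Proof.
elim: n => [|n IH]; first by rewrite /gsum big_ord0 mulr0 !expr0 subrr.
by rewrite gsumS mulrDr mulrCA IH !exprS; ring.
Qed.

Lemma gsum_gt0 a b n : 0 < a -> 0 <= b -> 0 < gsum a b n.+1.
Proof.
move=> ha hb; rewrite gsumS.
have h1 := exprn_gt0 n ha.
have : 0 <= b * gsum a b n.
  apply: mulr_ge0 => //; apply: sumr_ge0 => i _.
  by apply: mulr_ge0; apply: exprn_ge0; [exact: ltW | exact: hb].
lra.
Qed.

(* The l1-weight g G + l1 d^n of the point (g G, d^n), G = gsum delta d n,
   lies strictly between l1 delta^n and l2 delta^n, provided
   l1 delta < g + l1 d and g + l2 d <= l2 delta (i.e. T_k <= delta < T_(k-1)). *)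
Lemma vertex_weight_between (g d delta l1 l2 : R) n :
  0 < d -> 0 < delta -> l1 < l2 ->
  l1 * delta < g + l1 * d -> g + l2 * d <= l2 * delta ->
  l1 * delta ^+ n.+1 < g * gsum delta d n.+1 + l1 * d ^+ n.+1 < l2 * delta ^+ n.+1.
Proof.
move=> d0 dl0 l12 Hi Hk.
set G := gsum delta d n.+1.
have G0 : 0 < G by apply: gsum_gt0; rewrite ?ltW.
have dn0 : 0 < d ^+ n.+1 by rewrite exprn_gt0.
have -> : delta ^+ n.+1 = d ^+ n.+1 + (delta - d) * G by rewrite gsum_mul; ring.
apply/andP; split.
- have : 0 < G * (g + l1 * d - l1 * delta) by rewrite mulr_gt0 // subr_gt0.
  lra.
- have : 0 <= G * (l2 * delta - g - l2 * d) by apply: mulr_ge0; lra.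
  have : 0 < (l2 - l1) * d ^+ n.+1 by rewrite mulr_gt0 // subr_gt0.
  lra.
Qed.

End GeometricSums.

(* Integer coordinates of the points of N(Q^n) in the statement:
   [vtx_x] is gamma_n, [prev_x]/[prev_y] are (A_n, B_n) in case (i) and
   [crit_x] is A_n^* in case (ii). *)
Fixpoint vtx_x (g d delta n : nat) : nat :=
  if n is n'.+1 then (g * delta ^ n' + d * vtx_x g d delta n')%N else 0%N.
Fixpoint prev_x (A g d delta n : nat) : nat :=
  match n with
  | 0 => 0%N
  | n'.+1 => if n' is 0 then A else (g * delta ^ n' + d * prev_x A g d delta n')%N
  end.
Definition prev_y (B d n : nat) : nat := if n is n'.+1 then (B * d ^ n')%N else 1%N.
Fixpoint crit_x (A B delta n : nat) : nat :=
  if n is n'.+1 then (A * delta ^ n' + B * crit_x A B delta n')%N else 0%N.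

Section Coordinates.
Variable R : realType.

Lemma vtx_xE g d delta n :
  ((vtx_x g d delta n)%:R : R) = g%:R * gsum delta%:R d%:R n.
Proof.
elim: n => [|n IH]; first by rewrite /gsum big_ord0 mulr0.
by rewrite /= natrD !natrM IH natrX gsumS; ring.
Qed.

Lemma prev_xE A g d delta n : ((prev_x A g d delta n.+1)%:R : R) =
  g%:R * gsum delta%:R d%:R n.+1 - (g%:R - A%:R) * d%:R ^+ n.
Proof.
elim: n => [|n IH].
  by rewrite /= gsumS /gsum big_ord0 !expr0 mulr0 addr0 !mulr1; ring.
by rewrite [prev_x _ _ _ _ _]/= natrD !natrM IH natrX !gsumS !exprS; ring.
Qed.

Lemma crit_xE A B delta n : ((crit_x A B delta n)%:R : R) = gsum delta%:R B%:R n * A%:R.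
Proof.
elim: n => [|n IH]; first by rewrite /gsum big_ord0 mul0r.
by rewrite /= natrD !natrM IH natrX gsumS; ring.
Qed.

End Coordinates.

Section SkewIterates.
Variables (R : realType) (pc : nat -> R[i]) (q : ser R) (delta : nat).
Hypotheses (delta1 : (1 <= delta)%N) (pc_low : forall i, (i < delta)%N -> pc i = 0)
  (pc_delta : pc delta != 0).
Variables (A B g d : nat) (l1 : R).
Hypotheses (l10 : 0 < l1) (E1 : face q l1 A B g d) (B0 : (0 < B)%N) (d0 : (0 < d)%N).

Let P_face n := skew_iter_fst_face q delta1 pc_low pc_delta n l10.

Lemma Qn_face_generic (a3 b3 : nat) (l2 : R) :
  l1 < l2 -> face q l2 g d a3 b3 ->
  l1 * delta%:R < wt l1 g d -> wt l2 g d <= l2 * delta%:R ->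
  forall n, face (Qn pc q n) l1 (prev_x A g d delta n) (prev_y B d n)
                              (vtx_x g d delta n) (d ^ n).
Proof.
move=> l12 E2 Hi Hk; elim=> [|n IHQ]; first by rewrite /Qn /= expn0; exact: w_face.
have pa0 : (0 < delta ^ n)%N by rewrite expn_gt0 delta1.
have qvb0 : (0 < d ^ n)%N by rewrite expn_gt0 d0.
case: n IHQ pa0 qvb0 => [|n] IHQ pa0 qvb0.
  (* Q^1 = q(z, w): the face is the edge [(A, B), (g, d)] itself *)
  have Hmu : wt l1 (prev_x A g d delta 0) (prev_y B d 0) = l1 * (delta ^ 0)%:R.
    by rewrite /wt /= expn0; ring.
  have := comp_face l10 pa0 (ltn0Sn 0) qvb0 (P_face 0) IHQ Hmu E1.
  by rewrite /= !expn0 !muln1 !muln0 !addn0.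
have qpb0 : (0 < prev_y B d n.+1)%N by rewrite /= muln_gt0 B0 expn_gt0 d0.
have pa0r : 0 < ((delta ^ n.+1)%:R : R) by rewrite ltr0n.
(* the face of Q^n lies on the line wt_l1 = mu * delta^n, with l1 < mu < l2,
   so only the vertex (g, d) of q contributes to Q^(n+1) *)
set mu := wt l1 (vtx_x g d delta n.+1) (d ^ n.+1) / (delta ^ n.+1)%:R.
have Hmu : wt l1 (prev_x A g d delta n.+1) (prev_y B d n.+1) = mu * (delta ^ n.+1)%:R.
  by have [_ _ -> _ _] := IHQ; rewrite /mu divfK // lt0r_neq0.
have /andP[hmu1 hmu2] : l1 < mu < l2.
  have d0r : 0 < (d%:R : R) by rewrite ltr0n.
  have dl0 : 0 < (delta%:R : R) by rewrite ltr0n.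
  have /andP[h1 h2] := vertex_weight_between n d0r dl0 l12 Hi Hk.
  rewrite /mu ltr_pdivlMr // ltr_pdivrMr // /wt vtx_xE !natrX.
  by apply/andP; split; lra.
have Ey : prev_y B d n.+2 = (d * prev_y B d n.+1)%N by rewrite /= expnS mulnCA.
rewrite Ey expnS.
exact: comp_face l10 pa0 qpb0 qvb0 (P_face n.+1) IHQ Hmu (mid_face E1 E2 hmu1 hmu2).
Qed.

(* Case (ii), delta = T_(k-1): the point (A, B) itself stays on the line of
   weight l1 * delta, so the whole edge is transported: the l1-face of Q^n is
   [(A_n^*, B^n), (gamma_n, d^n)], of weight l1 * delta^n. *)
Lemma Qn_face_critical : wt l1 A B = l1 * delta%:R ->
  forall n, face (Qn pc q n) l1 (crit_x A B delta n) (B ^ n) (vtx_x g d delta n) (d ^ n)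
         /\ wt l1 (crit_x A B delta n) (B ^ n) = l1 * (delta ^ n)%:R.
Proof.
move=> HAB; elim=> [|n [IHQ IHw]].
  by rewrite /Qn /wt /= !expn0; split; [exact: w_face | ring].
have pa0 : (0 < delta ^ n)%N by rewrite expn_gt0 delta1.
have qvb0 : (0 < d ^ n)%N by rewrite expn_gt0 d0.
have qpb0 : (0 < B ^ n)%N by rewrite expn_gt0 B0.
split; first by rewrite !expnS; exact: comp_face l10 pa0 qpb0 qvb0 (P_face n) IHQ IHw E1.
rewrite [crit_x _ _ _ _]/= expnS (wt_combination _ _ IHw) HAB expnS natrM; ring.
Qed.

End SkewIterates.

Section Proposition6.
Variables (R : realType) (pc : nat -> R[i]) (q : ser R) (delta : nat).
Hypotheses (delta1 : (1 <= delta)%N) (pc_low : forall i, (i < delta)%N -> pc i = 0)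
  (pc_delta : pc delta != 0).
Variables (A B g d : nat) (l1 : R).
Hypotheses (l10 : 0 < l1) (E1 : face q l1 A B g d) (Ag : (A < g)%N) (d0 : (0 < d)%N).

Lemma yintercept_prev : yintercept (A%:R, B%:R) (g%:R, d%:R) = wt l1 g d / l1 :> R.
Proof. by have [] := face_summary l10 E1 Ag. Qed.

Lemma prec_vertex_generic (a3 b3 : nat) (l2 : R) :
  0 < l2 -> face q l2 g d a3 b3 -> (g < a3)%N -> (0 < B)%N ->
  yintercept (R:=R) (g%:R, d%:R) (a3%:R, b3%:R) <= delta%:R ->
  delta%:R < yintercept (R:=R) (A%:R, B%:R) (g%:R, d%:R) ->
  forall n, (1 <= n)%N ->
    let P := (g%:R * gsum delta%:R d%:R n - (g%:R - A%:R) * d%:R ^+ n.-1,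
              B%:R * d%:R ^+ n.-1) in
    let V := (g%:R * gsum delta%:R d%:R n, d%:R ^+ n) in
    prec_vertex (newton (Qn pc q n)) P V /\ slope P V = - l1^-1 /\
    delta%:R ^+ n < yintercept P V.
Proof.
move=> l20 E2 ga3 B0 HTk HTk1 [//|n] _ P V.
have l12 := face_weights_increase l20 E1 E2 ga3.
have Hi : l1 * delta%:R < wt l1 g d by rewrite mulrC -ltr_pdivlMr // -yintercept_prev.
have Hk : wt l2 g d <= l2 * delta%:R.
  have [_ _ e2 _ _] := E2; have [_ _ Ty] := face_summary l20 E2 ga3.
  by rewrite e2 mulrC -ler_pdivrMr // -Ty.
have EQ := Qn_face_generic delta1 pc_low pc_delta l10 E1 B0 d0 l12 E2 Hi Hk n.+1.
have -> : P = ((prev_x A g d delta n.+1)%:R, (prev_y B d n.+1)%:R).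
  by rewrite /P prev_xE /= natrM natrX.
have -> : V = ((vtx_x g d delta n.+1)%:R, (d ^ n.+1)%:R) by rewrite /V vtx_xE natrX.
have hpv : (prev_x A g d delta n.+1 < vtx_x g d delta n.+1)%N.
  rewrite -(ltr_nat R) prev_xE vtx_xE.
  have : 0 < (g%:R - A%:R) * (d%:R ^+ n : R).
    by rewrite mulr_gt0 ?exprn_gt0 ?ltr0n // subr_gt0 ltr_nat.
  lra.
have [Hprec Hs ->] := face_summary l10 EQ hpv.
do 2!split=> //; rewrite ltr_pdivlMr // /wt vtx_xE !natrX.
have d0r : 0 < (d%:R : R) by rewrite ltr0n.
have dl0 : 0 < (delta%:R : R) by rewrite ltr0n.
by have /andP[h _] := vertex_weight_between n d0r dl0 l12 Hi Hk; lra.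
Qed.

Lemma prec_vertex_critical : (d < B)%N ->
  delta%:R = yintercept (R:=R) (A%:R, B%:R) (g%:R, d%:R) ->
  forall n, (1 <= n)%N ->
    let P := (gsum delta%:R B%:R n * A%:R, B%:R ^+ n) in
    let V := (g%:R * gsum delta%:R d%:R n, d%:R ^+ n) in
    prec_vertex (newton (Qn pc q n)) P V /\ slope P V = - l1^-1 /\
    delta%:R ^+ n = yintercept P V.
Proof.
move=> dB HT [//|n] _ P V.
have B0 : (0 < B)%N := leq_ltn_trans (leq0n d) dB.
have HAB : wt l1 A B = l1 * delta%:R.
  have [_ _ -> _ _] := E1; by rewrite HT yintercept_prev mulrC divfK ?lt0r_neq0.
have [EQ Ew] := Qn_face_critical delta1 pc_low pc_delta l10 E1 B0 d0 HAB n.+1.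
have -> : P = ((crit_x A B delta n.+1)%:R, (B ^ n.+1)%:R) by rewrite /P crit_xE natrX.
have -> : V = ((vtx_x g d delta n.+1)%:R, (d ^ n.+1)%:R) by rewrite /V vtx_xE natrX.
have hpv : (crit_x A B delta n.+1 < vtx_x g d delta n.+1)%N.
  have [_ _ Qe _ _] := EQ; move: Qe; rewrite /wt -(ltr_nat R) => Qe.
  have : (d ^ n.+1)%:R < (B ^ n.+1)%:R :> R by rewrite ltr_nat ltn_exp2r.
  move=> dB'; have : 0 < l1 * ((B ^ n.+1)%:R - (d ^ n.+1)%:R).
    by rewrite mulr_gt0 // subr_gt0.
  lra.
have [Hprec Hs ->] := face_summary l10 EQ hpv.
have [_ _ <- _ _] := EQ.
do 2!split=> //; rewrite Ew natrX; field; exact: lt0r_neq0.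
Qed.

End Proposition6.

Unset Implicit Arguments.

Theorem proposition6 (R : realType) (pc : nat -> R[i]) (delta : nat)
  (q : ser R) (s : nat) (vn vm : nat -> nat) (k : nat) :
  (* f = (p, q) is a holomorphic skew product germ fixing the origin *)
  convergent1 pc -> convergent2 q ->
  (1 <= delta)%N -> (forall i, (i < delta)%N -> pc i = 0) -> pc delta != 0 ->
  q 0%N 0%N = 0 -> (exists i j, q i j != 0) ->
  (* (vn 1, vm 1), ..., (vn s, vm s) are the vertices of N(q) *)
  (forall i, (1 <= i < s)%N -> (vn i < vn i.+1)%N /\ (vm i.+1 < vm i)%N) ->
  (forall v : R * R, is_vertex (newton q) v <->
     exists i, (1 <= i <= s)%N /\ v = ((vn i)%:R, (vm i)%:R)) ->
  (* Case 4 with index k *)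
  (2 < s)%N -> (2 <= k <= s.-1)%N ->
  yintercept (R:=R) ((vn k)%:R, (vm k)%:R) ((vn k.+1)%:R, (vm k.+1)%:R) <= delta%:R ->
  delta%:R <= yintercept (R:=R) ((vn k.-1)%:R, (vm k.-1)%:R) ((vn k)%:R, (vm k)%:R) ->
  let gam : R := (vn k)%:R in
  let d : R := (vm k)%:R in
  let A : R := (vn k.-1)%:R in
  let B : R := (vm k.-1)%:R in
  let l1 : R := ((vn k)%:R - (vn k.-1)%:R) / ((vm k.-1)%:R - (vm k)%:R) in
  let T_prev : R := yintercept (A, B) (gam, d) in
  let gam_n (n : nat) : R := gam * gsum delta%:R d n in
  (* (i) *)
  (delta%:R < T_prev ->
    forall n : nat, (1 <= n)%N ->
      let P := (gam_n n - (gam - A) * d ^+ n.-1, B * d ^+ n.-1) in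
      let V := (gam_n n, d ^+ n) in
      prec_vertex (newton (Qn pc q n)) P V /\
      slope P V = - l1^-1 /\
      (delta%:R : R) ^+ n < yintercept P V) /\
  (* (ii) *)
  (delta%:R = T_prev ->
    forall n : nat, (1 <= n)%N ->
      let P := (gsum delta%:R B n * A, B ^+ n) in
      let V := (gam_n n, d ^+ n) in
      prec_vertex (newton (Qn pc q n)) P V /\
      slope P V = - l1^-1 /\
      (delta%:R : R) ^+ n = yintercept P V).
Proof.
move=> _ _ d1 pc_low pc_delta _ q_neq0 vmono vertices _ /andP[k2 ks] HTk _.
have hk1 : (1 <= k.-1 < s)%N by lia.
have hk : (1 <= k < s)%N by lia.
(* the two edges of N(q) meeting at the vertex (gamma, d) = (vn k, vm k) *)
have E1 := face_of_vertices q_neq0 vmono vertices hk1.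
rewrite /edge_wt prednK ?(ltnW k2) // in E1.
have E2 := face_of_vertices q_neq0 vmono vertices hk.
have l10 := edge_wt_gt0 R vmono hk1; rewrite /edge_wt prednK ?(ltnW k2) // in l10.
have l20 := edge_wt_gt0 R vmono hk.
have [An Bd] := vmono _ hk1; rewrite prednK ?(ltnW k2) // in An Bd.
have [gn db] := vmono _ hk.
have d0 : (0 < vm k)%N by lia.
have B0 : (0 < vm k.-1)%N by lia.
split=> [Hi | Hii].
- exact (prec_vertex_generic d1 pc_low pc_delta l10 E1 An d0 l20 E2 gn B0 HTk Hi).
- exact (prec_vertex_critical d1 pc_low pc_delta l10 E1 An d0 Bd Hii).
Qed.
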